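(* Let $P$ be a discrete Dubins path, let $ab$ be a long edge of $P$ (traversed from $a$ to $b$), and let $P'$ be the part of $P$ from $b$ to its last vertex. For $\varepsilon\in[0,1]$ let $P(\varepsilon)$ be the path obtained from $P$ by rigidly translating $P'$ by the vector $\varepsilon(a-b)$ (towards $a$ along $ab$ by distance $\varepsilon|ab|$), so that the edge $ab$ is replaced by the segment from $a$ to $b+\varepsilon(a-b)$. Then there exists $\varepsilon>0$ such that $P(\varepsilon)$ is a discrete curvature-constrained path.
   Context: Fix an angle $\theta$ with $0\le\theta\le\pi/2$ such that $2\pi/\theta$ is an integer, and a length $\ell>0$. For a polygonal path, the turn at an internal vertex is the angle in $[0,\pi]$ between the direction of the incoming edge and the direction of the outgoing edge. An edge is short if its length is $<\ell$, normal if $=\ell$, long if $>\ell$. An edge $e$ with an adjacent edge at each end is an inflection edge if its two adjacent edges lie on opposite sides of the supporting line of $e$, and non-inflection otherwise. A discrete curvature-constrained path is a polygonal path such that: (i) the turn at every internal vertex is at most $\theta$; (ii) no two adjacent edges are both short; (iii) for every short non-inflection edge $ab$ with adjacent edges $a^-a$ and $bb^+$, the angle between the directions $\overrightarrow{a^-a}$ and $\overrightarrow{bb^+}$ is at most $\theta$. A configuration is a pair $(u,U)$ of a point $u$ and a vector $U$ of length $\ell$. A polygonal path $P$ with first vertex $u$ starts at $(u,U)$ if prepending the segment from $u-U$ to $u$ (the pre-edge) yields a discrete curvature-constrained path; $P$ with last vertex $v$ ends at $(v,V)$ if appending the segment from $v$ to $v+V$ (the post-edge) yields a discrete curvature-constrained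 path. A discrete Dubins path is a discrete curvature-constrained path of minimum length among all those starting at a given configuration $\mathcal U$ and ending at a given configuration $\mathcal V$. Standing assumption: paths make a non-zero turn at every internal vertex. *)

From Stdlib Require Import Reals Lra List.
Open Scope R_scope.

Definition pt := (R * R)%type.

Definition vadd (p q : pt) : pt := (fst p + fst q, snd p + snd q).
Definition vsub (p q : pt) : pt := (fst p - fst q, snd p - snd q).
Definition vscale (c : R) (p : pt) : pt := (c * fst p, c * snd p).
Definition dot (p q : pt) : R := fst p * fst q + snd p * snd q.
Definition cross (p q : pt) : R := fst p * snd q - snd p * fst q.
Definition vnorm (p : pt) : R := sqrt (dot p p).
Definition dist (p q : pt) : R := vnorm (vsub q p).

Definition vangle (p q : pt) : R := acos (dot p q / (vnorm p * vnorm q)).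

Definition vtx (P : list pt) (i : nat) : pt := nth i P (0, 0).
Definition evec (P : list pt) (i : nat) : pt := vsub (vtx P (S i)) (vtx P i).
Definition elen (P : list pt) (i : nat) : R := vnorm (evec P i).

Definition short (l : R) (P : list pt) (i : nat) : Prop := elen P i < l.

(* edge i (with both adjacent edges i-1 and i+1, i.e. 1 <= i, i+2 < length P)
   is an inflection edge if the adjacent edges lie (strictly) on opposite
   sides of its supporting line *)
Definition inflection (P : list pt) (i : nat) : Prop :=
  cross (evec P i) (vsub (vtx P (i - 1)) (vtx P i)) *
  cross (evec P i) (vsub (vtx P (i + 2)) (vtx P i)) < 0.

(* turn at internal vertex j (1 <= j, j+1 < length P) *)
Definition turn (P : list pt) (j : nat) : R := vangle (evec P (j - 1)) (evec P j).

Definition path_length (P : list pt) : R :=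
  fold_right Rplus 0 (map (elen P) (seq 0 (length P - 1))).

Definition dcc (theta l : R) (P : list pt) : Prop :=
  (forall i, (S i < length P)%nat -> vtx P i <> vtx P (S i)) /\
  (forall j, (1 <= j)%nat -> (S j < length P)%nat -> turn P j <= theta) /\
  (forall i, (i + 2 < length P)%nat -> ~ (short l P i /\ short l P (S i))) /\
  (forall i, (1 <= i)%nat -> (i + 2 < length P)%nat ->
     short l P i -> ~ inflection P i ->
     vangle (evec P (i - 1)) (evec P (S i)) <= theta).

Definition starts_at (theta l : R) (u U : pt) (P : list pt) : Prop :=
  P <> nil /\ vtx P 0 = u /\ dcc theta l (vsub u U :: P).

Definition ends_at (theta l : R) (v V : pt) (P : list pt) : Prop :=
  P <> nil /\ last P (0, 0) = v /\ dcc theta l (P ++ vadd v V :: nil).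

Definition dubins (theta l : R) (u U v V : pt) (P : list pt) : Prop :=
  dcc theta l P /\ starts_at theta l u U P /\ ends_at theta l v V P /\
  forall Q, dcc theta l Q -> starts_at theta l u U Q -> ends_at theta l v V Q ->
    path_length P <= path_length Q.

Definition nonzero_turns (P : list pt) : Prop :=
  forall j, (1 <= j)%nat -> (S j < length P)%nat -> turn P j <> 0.

(* P(eps) for the edge i -> i+1 (a = vertex i, b = vertex i+1):
   translate the part from b to the end by eps (a - b) *)
Definition shift_after (P : list pt) (i : nat) (eps : R) : list pt :=
  firstn (S i) P ++
  map (fun q => vadd q (vscale eps (vsub (vtx P i) (vtx P (S i))))) (skipn (S i) P).

(* Shortening the long edge ab to a segment of length (1 - eps) |ab| and
   translating the rest of the path rigidly multiplies every edge vector by a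
   positive scalar: 1 - eps for ab and 1 for all other edges.  Turns, the angles
   of condition (iii) and the inflection status of edges are invariant under
   positive rescalings of the edge vectors, so only shortness can change, and
   only for ab.  Any eps <= 1 - l / |ab| keeps ab of length at least l. *)

From Stdlib Require Import Reals List Lia Lra.
Open Scope R_scope.

Lemma vnorm_scale c p : 0 < c -> vnorm (vscale c p) = c * vnorm p.
Proof.
  intro Hc. unfold vnorm.
  replace (dot (vscale c p) (vscale c p)) with ((c * c) * dot p p)
    by (destruct p; unfold dot, vscale; simpl; ring).
  rewrite sqrt_mult_alt by nra. rewrite sqrt_square by lra. reflexivity.
Qed.

Lemma vangle_scale c1 c2 p q :
  0 < c1 -> 0 < c2 -> vangle (vscale c1 p) (vscale c2 q) = vangle p q.
Proof.
  intros H1 H2. unfold vangle. rewrite !vnorm_scale by lra. f_equal.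
  replace (dot (vscale c1 p) (vscale c2 q)) with ((c1 * c2) * dot p q)
    by (destruct p, q; unfold dot, vscale; simpl; ring).
  unfold Rdiv. rewrite !Rinv_mult.
  transitivity (dot p q * (/ vnorm p * / vnorm q) * ((c1 * / c1) * (c2 * / c2)));
    [ring |].
  rewrite !Rinv_r by lra. ring.
Qed.

Lemma cross_scale c1 c2 p q : cross (vscale c1 p) (vscale c2 q) = c1 * c2 * cross p q.
Proof. destruct p, q; unfold cross, vscale; simpl; ring. Qed.

Lemma vscale_eq0 c p : 0 < c -> vscale c p = (0, 0) -> p = (0, 0).
Proof.
  intros Hc E. destruct p as [x y]. unfold vscale in E; simpl in E.
  injection E as Ex Ey. f_equal; nra.
Qed.

Lemma evec_neq0 (P : list pt) j : evec P j <> (0, 0) <-> vtx P j <> vtx P (S j).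
Proof.
  unfold evec, vsub. destruct (vtx P j) as [x1 y1], (vtx P (S j)) as [x2 y2]; simpl.
  split; intros H E.
  - apply H. injection E as -> ->. f_equal; ring.
  - apply H. injection E as Ex Ey. f_equal; lra.
Qed.

Lemma inflectionE (P : list pt) j : (1 <= j)%nat ->
  inflection P j <->
  0 < cross (evec P j) (evec P (j - 1)) * cross (evec P j) (evec P (S j)).
Proof.
  intro Hj. unfold inflection, evec.
  replace (S (j - 1)) with j by lia. replace (j + 2)%nat with (S (S j)) by lia.
  destruct (vtx P (j - 1)) as [a1 a2], (vtx P j) as [b1 b2],
    (vtx P (S j)) as [c1 c2], (vtx P (S (S j))) as [d1 d2].
  unfold cross, vsub; simpl.
  match goal with |- ?A < 0 <-> 0 < ?B => assert (A = - B) by ring end.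
  lra.
Qed.

Section Rescaling.

Variables (theta l : R) (P Q : list pt) (k : nat -> R).
Hypothesis Hlen : length Q = length P.
Hypothesis Hk : forall j, 0 < k j.
Hypothesis HQ : forall j, (S j < length P)%nat -> evec Q j = vscale (k j) (evec P j).

Lemma turn_rescale j : (1 <= j)%nat -> (S j < length P)%nat -> turn Q j = turn P j.
Proof.
  intros H1 H2. unfold turn. rewrite !HQ by lia. apply vangle_scale; apply Hk.
Qed.

Lemma inflection_rescale j : (1 <= j)%nat -> (j + 2 < length P)%nat ->
  inflection P j -> inflection Q j.
Proof.
  intros H1 H2. rewrite !inflectionE by lia. rewrite !HQ by lia. rewrite !cross_scale.
  set (X := cross (evec P j) (evec P (j - 1))).
  set (Y := cross (evec P j) (evec P (S j))).
  replace (k j * k (j - 1)%nat * X * (k j * k (S j) * Y))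
    with ((k j * k j) * (k (j - 1)%nat * k (S j)) * (X * Y)) by ring.
  pose proof (Hk j). pose proof (Hk (j - 1)%nat). pose proof (Hk (S j)).
  intro HXY. apply Rmult_lt_0_compat; [| exact HXY].
  apply Rmult_lt_0_compat; apply Rmult_lt_0_compat; assumption.
Qed.

Hypothesis Hshort : forall j, (S j < length P)%nat -> short l Q j -> short l P j.

Lemma dcc_rescale : dcc theta l P -> dcc theta l Q.
Proof.
  intros [Hedge [Hturn [Hadj Hiii]]]. unfold dcc. rewrite Hlen.
  split; [| split; [| split]].
  - intros j Hj. apply evec_neq0. rewrite HQ by lia. intro E.
    apply (proj2 (evec_neq0 P j) (Hedge j Hj)). exact (vscale_eq0 _ _ (Hk j) E).
  - intros j H1 H2. rewrite turn_rescale by lia. apply Hturn; lia.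
  - intros j Hj [Hs1 Hs2]. apply (Hadj j Hj). split; apply Hshort; auto; lia.
  - intros j H1 H2 Hs Hinfl.
    rewrite !HQ by lia. rewrite vangle_scale by apply Hk.
    apply Hiii; auto.
    + apply Hshort; auto; lia.
    + intro HinflP. exact (Hinfl (inflection_rescale j H1 H2 HinflP)).
Qed.

End Rescaling.

Section ShiftAfter.

Variables (P : list pt) (i : nat) (eps : R).
Hypothesis Hi : (S i < length P)%nat.

Let d := vscale eps (vsub (vtx P i) (vtx P (S i))).

Lemma length_shift_after : length (shift_after P i eps) = length P.
Proof.
  unfold shift_after. rewrite length_app, length_map, length_firstn, length_skipn. lia.
Qed.

Lemma vtx_shift_after_le j : (j <= i)%nat -> vtx (shift_after P i eps) j = vtx P j.
Proof.
  intro Hj. unfold vtx, shift_after. rewrite app_nth1 by (rewrite length_firstn; lia).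
  rewrite nth_firstn. replace (j <? S i)%nat with true by (symmetry; apply Nat.ltb_lt; lia).
  reflexivity.
Qed.

Lemma vtx_shift_after_gt j : (i < j < length P)%nat ->
  vtx (shift_after P i eps) j = vadd (vtx P j) d.
Proof.
  intros Hj. unfold vtx, shift_after.
  rewrite app_nth2; rewrite length_firstn; [| lia].
  replace (Init.Nat.min (S i) (length P)) with (S i) by lia.
  rewrite nth_indep with (d' := vadd (0, 0) d)
    by (rewrite length_map, length_skipn; lia).
  unfold d. rewrite (map_nth (fun q => vadd q (vscale eps (vsub (vtx P i) (vtx P (S i)))))).
  rewrite nth_skipn. do 2 f_equal. lia.
Qed.

Definition shift_factor (j : nat) : R := if Nat.eqb j i then 1 - eps else 1.

Lemma evec_shift_after j : (S j < length P)%nat ->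
  evec (shift_after P i eps) j = vscale (shift_factor j) (evec P j).
Proof.
  intro Hj. unfold evec, shift_factor.
  destruct (Nat.eqb_spec j i) as [-> | Hji].
  - rewrite (vtx_shift_after_le i), (vtx_shift_after_gt (S i)) by lia.
    unfold d. destruct (vtx P i), (vtx P (S i)).
    unfold vadd, vsub, vscale; simpl. f_equal; ring.
  - destruct (Nat.lt_ge_cases j i).
    + rewrite !vtx_shift_after_le by lia.
      destruct (vtx P j), (vtx P (S j)). unfold vsub, vscale; simpl. f_equal; ring.
    + rewrite !vtx_shift_after_gt by lia.
      destruct (vtx P j), (vtx P (S j)), d. unfold vadd, vsub, vscale; simpl. f_equal; ring.
Qed.

Lemma dcc_shift_after theta l :
  0 < l -> l < elen P i -> 0 < eps <= 1 - l / elen P i ->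
  dcc theta l P -> dcc theta l (shift_after P i eps).
Proof.
  intros Hl Hlong Heps.
  assert (Hpos : 0 < l / elen P i) by (apply Rdiv_lt_0_compat; lra).
  assert (Hfactor : forall j, 0 < shift_factor j).
  { intro j. unfold shift_factor. destruct (Nat.eqb j i); lra. }
  apply (dcc_rescale theta l P _ shift_factor length_shift_after Hfactor evec_shift_after).
  intros j Hj. unfold short, elen. rewrite evec_shift_after, vnorm_scale by auto.
  unfold shift_factor. destruct (Nat.eqb_spec j i) as [-> | _]; [| lra].
  intro Hs. exfalso. fold (elen P i) in Hs.
  assert (l / elen P i * elen P i = l) by (field; lra). nra.
Qed.

End ShiftAfter.

Theorem lemma6 (theta l : R) (u U v V : pt) (P : list pt) (i : nat)
  (Htheta : 0 <= theta <= PI / 2)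
  (Hk : exists k : nat, theta * INR k = 2 * PI)
  (Hl : 0 < l)
  (HU : vnorm U = l) (HV : vnorm V = l)
  (HP : dubins theta l u U v V P)
  (Hnz : nonzero_turns P)
  (Hi : (S i < length P)%nat)
  (Hlong : l < elen P i) :
  exists eps : R, 0 < eps /\ eps <= 1 /\ dcc theta l (shift_after P i eps).
Proof.
  destruct HP as [HdccP _].
  assert (Hratio : 0 < l / elen P i < 1).
  { split; [apply Rdiv_lt_0_compat; lra |].
    apply (Rmult_lt_reg_r (elen P i)); [lra |]. field_simplify; lra. }
  exists (1 - l / elen P i).
  split; [lra | split; [lra |]].
  apply dcc_shift_after; auto; lra.
Qed.
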